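(* Let $\mathcal F$ be a frame and let $\Psi=\Psi(\mathcal F)$, $\vec p$ and $\mathbb{P}$ be as in the context. Then for $\mathbb{P}$-almost every $\omega\in\Omega$, $$\dim_H\big(J(\Psi(\omega))\big)=0.$$
   Context: Let $d\ge1$, $X=[0,1]^d$, and $\boldsymbol e_1,\dots,\boldsymbol e_d$ the standard basis of $\mathbb{R}^d$. For $\boldsymbol i=(i_1,\dots,i_d)\in\{0,1\}^d$ let $\phi_{\boldsymbol i}(x)=\frac12x+\frac12\sum_{\ell=1}^d i_\ell\boldsymbol e_\ell$. Let $I_1=\{(0,\dots,0)\}$ and $I_{2^d}=\{0,1\}^d$. A frame is a pair $\mathcal F=(\{U_n\}_{n\in\mathbb{N}},\{V_n\}_{n\in\mathbb{N}})$ of sequences of positive integers with $U_1\ge1$ and, for all $n\in\mathbb{N}$, $nU_n\le V_n$ and $(U_n+V_n)^3\le U_{n+1}$. For $i\in\mathbb{N}$ let $I^{(i)}=I_1^{U_i}\times I_{2^d}^{V_i}$, for $\tau=(\tau_1,\dots,\tau_{U_i+V_i})\in I^{(i)}$ let $\psi^{(i)}_\tau=\phi_{\tau_1}\circ\cdots\circ\phi_{\tau_{U_i+V_i}}$, and $\Psi(\mathcal F)=\{\Psi^{(i)}\}_{i\in\mathbb{N}}$ with $\Psi^{(i)}=\{\psi^{(i)}_\tau\}_{\tau\in I^{(i)}}$. Let $p_n=\frac{1}{Cn^2}$, $C=\sum_{n\ge1}n^{-2}$, and let $\mathbb{P}$ be the Bernoulli measure on $\Omega=\mathbb{N}^{\mathbb{N}}$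 with $\mathbb{P}([\omega_1\dots\omega_n])=p_{\omega_1}\cdots p_{\omega_n}$. For $\omega\in\Omega$, $\Sigma^n_\omega=\prod_{k=1}^nI^{(\omega_k)}$, $\psi^{(\omega)}_\tau=\psi^{(\omega_1)}_{\tau_1}\circ\cdots\circ\psi^{(\omega_n)}_{\tau_n}$ for $\tau\in\Sigma^n_\omega$, and $J(\Psi(\omega))=\bigcap_{n\ge1}\bigcup_{\tau\in\Sigma^n_\omega}\psi^{(\omega)}_\tau(X)$. $\dim_H$ is Euclidean Hausdorff dimension. *)

From HB Require Import structures.
From mathcomp Require Import all_boot all_order all_algebra.
From mathcomp Require Import all_classical all_reals all_analysis.
Set Implicit Arguments. Unset Strict Implicit. Unset Printing Implicit Defensive.
Import Order.TTheory GRing.Theory Num.Theory.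
Import numFieldNormedType.Exports.
Local Open Scope classical_set_scope.
Local Open Scope ring_scope.

Section Defs.
Variable R : realType.
Variable d : nat.

Definition pt := 'I_d -> R.

Definition edist (x y : pt) : R := Num.sqrt (\sum_(l < d) (x l - y l) ^+ 2).

(* diameter (Euclidean); -oo for the empty set *)
Definition diam (A : set pt) : \bar R :=
  ereal_sup [set r | exists x y, A x /\ A y /\ r = (edist x y)%:E].

(* diam(A)^s, with the convention that the empty set contributes 0 *)
Definition hcontrib (s : R) (A : set pt) : \bar R :=
  match diam A with
  | EFin r => (powR r s)%:E
  | +oo%E => +oo%E
  | -oo%E => 0%E
  end.

Definition hausdorff_delta (s delta : R) (A : set pt) : \bar R :=
  ereal_inf [set (\sum_(i <oo) hcontrib s (C i))%E | C in
    [set C : nat -> set pt | A `<=` \bigcup_i C i /\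
                             forall i, (diam (C i) <= delta%:E)%E]].

Definition hausdorff (s : R) (A : set pt) : \bar R :=
  ereal_sup [set hausdorff_delta s delta A | delta in [set delta : R | 0 < delta]].

Definition hdim (A : set pt) : \bar R :=
  ereal_inf [set s%:E | s in [set s : R | 0 <= s /\ hausdorff s A = 0%E]].

Definition Xcube : set pt := [set x | forall l, 0 <= x l <= 1].

Definition phi (b : 'I_d -> bool) (x : pt) : pt :=
  fun l => x l / 2 + (b l)%:R / 2.

Definition phi_word (w : seq ('I_d -> bool)) (x : pt) : pt :=
  foldr phi x w.

(* frame (U_n)_{n>=1}, (V_n)_{n>=1}; values at 0 are irrelevant *)
Definition is_frame (U V : nat -> nat) : Prop :=
  (1 <= U 1)%N /\
  forall n, (1 <= n)%N ->
    [/\ (0 < U n)%N, (0 < V n)%N, (n * U n <= V n)%N &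
        ((U n + V n) ^ 3 <= U n.+1)%N].

(* w in I^(i) = I_1^{U_i} x I_{2^d}^{V_i} *)
Definition in_I (U V : nat -> nat) (i : nat) (w : seq ('I_d -> bool)) : Prop :=
  size w = (U i + V i)%N /\
  forall k, (k < U i)%N -> forall l, nth (fun _ => false) w k l = false.

(* J(Psi(omega)); omega k is the (k+1)-th letter omega_{k+1} *)
Definition Jset (U V : nat -> nat) (omega : nat -> nat) : set pt :=
  [set x | forall n, (0 < n)%N ->
     exists ws : seq (seq ('I_d -> bool)),
       [/\ size ws = n,
           (forall k, (k < n)%N -> in_I U V (omega k) (nth [::] ws k)) &
           exists y, Xcube y /\ x = phi_word (flatten ws) y]].

End Defs.

Definition Cconst (R : realType) : R :=
  limn (series (fun n : nat => ((n.+1)%:R ^+ 2 : R)^-1)).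

Definition pn (R : realType) (n : nat) : R := ((Cconst R) * (n%:R ^+ 2))^-1.

(* cylinder [a_1 ... a_m] in Omega = N^N (positions 0-based) *)
Definition cylinder (a : seq nat) : set (nat -> nat) :=
  [set omega | forall k, (k < size a)%N -> omega k = nth 0%N a k].

Definition cyl_mass (R : realType) (a : seq nat) : R := \prod_(k <- a) pn R k.

(* N is P-null: its outer measure (inf over countable covers by cylinders
   with positive-integer entries of the total P-mass) is 0 *)
Definition P_null (R : realType) (N : set (nat -> nat)) : Prop :=
  forall eps : R, 0 < eps ->
    exists c : nat -> seq nat,
      [/\ (forall j, all (fun k => 0 < k)%N (c j)),
          N `<=` \bigcup_j cylinder (c j) &
          (\sum_(j <oo) (cyl_mass R (c j))%:E <= eps%:E)%E].

(* Each level-n block of a word consists of U_n forced zero letters followed by V_n free ones.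
   Since p_n ~ n^-2, the probability that the first V_(j+2) levels all lie below j+3 is at most
   (1 - p_(j+3))^V_(j+2) <= C 2^-j, so by Borel--Cantelli almost every omega has, for all large j,
   some level omega_k >= j+3 with k < V_(j+2).  At the first such k, J(Psi(omega)) is covered by
   2^(d V_(j+2)^2) images of the cube of diameter sqrt d 2^-U_(omega_k) <= sqrt d 2^-(V_(j+2)^3);
   the cubic gap between these exponents drives every s-dimensional Hausdorff sum to 0. *)

From Pilot Require Import Defs.
From HB Require Import structures.
From mathcomp Require Import all_boot all_order all_algebra.
From mathcomp Require Import all_classical all_reals all_analysis.
From mathcomp Require Import zify ring lra.
Set Implicit Arguments. Unset Strict Implicit. Unset Printing Implicit Defensive.
Import Order.TTheory GRing.Theory Num.Theory.
Import numFieldNormedType.Exports.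
Local Open Scope classical_set_scope.
Local Open Scope ring_scope.

Lemma leq_cube a : (a <= a ^ 3)%N.
Proof. by case: a => // a; rewrite expnS leq_pmulr // expn_gt0. Qed.

Lemma homo_leq_gt0 (f : nat -> nat) :
  (forall n, (0 < n)%N -> (f n <= f n.+1)%N) ->
  forall m n, (0 < m)%N -> (m <= n)%N -> (f m <= f n)%N.
Proof.
move=> f_step m n m0 mn.
have : {in [pred k | 0 < k]%N &, {homo f : i j / (i <= j)%N}}.
  apply: homo_leq_in => //; first exact: leq_trans.
    by move=> i j /[!inE] i0 _ k /andP[ik _]; rewrite inE (ltn_trans i0 ik).
  by move=> k /[!inE] k0 _; apply: f_step.
by apply; rewrite ?inE // (leq_trans m0 mn).
Qed.

Section FrameGrowth.
Variables U V : nat -> nat.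
Hypothesis frameUV : is_frame U V.

Lemma frameP n : (0 < n)%N ->
  [/\ (0 < U n)%N, (0 < V n)%N, (n * U n <= V n)%N & ((U n + V n) ^ 3 <= U n.+1)%N].
Proof. by case: frameUV => _ /(_ n). Qed.

Lemma U_le_V n : (0 < n)%N -> (U n <= V n)%N.
Proof. by move=> n0; have [_ _ + _] := frameP n0; apply: leq_trans; rewrite leq_pmull. Qed.

Lemma UV_le_Usucc n : (0 < n)%N -> (U n + V n <= U n.+1)%N.
Proof. by move=> n0; have [_ _ _] := frameP n0; apply: leq_trans (leq_cube _). Qed.

Lemma V_cube_le_Usucc n : (0 < n)%N -> (V n ^ 3 <= U n.+1)%N.
Proof.
by move=> n0; have [_ _ _] := frameP n0; apply: leq_trans; rewrite leq_exp2r ?leq_addl.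
Qed.

Lemma U_le m n : (0 < m)%N -> (m <= n)%N -> (U m <= U n)%N.
Proof.
by apply: homo_leq_gt0 => k k0; apply: leq_trans (leq_addr _ _) (UV_le_Usucc k0).
Qed.

Lemma V_le m n : (0 < m)%N -> (m <= n)%N -> (V m <= V n)%N.
Proof.
apply: homo_leq_gt0 => k k0; apply: leq_trans (leq_addl (U k) _) _.
exact: leq_trans (UV_le_Usucc k0) (U_le_V (ltn0Sn k)).
Qed.

Lemma V_2_ge16 : (16 <= V 2)%N.
Proof.
have [U1 _] := frameUV; have [_ _ V1 U2] := frameP (isT : (0 < 1)%N).
have [_ _ V2 _] := frameP (isT : (0 < 2)%N).
suff : (2 ^ 3 <= U 2)%N by lia.
by apply: leq_trans U2; rewrite leq_exp2r //; lia.
Qed.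

(* The growth that makes the Borel--Cantelli sum over [j] converge. *)
Lemma V_growth j : ((j + 3) ^ 2 * 2 ^ j <= V (j + 2))%N.
Proof.
elim: j => [|j IH]; first by apply: leq_trans V_2_ge16.
set v := V (j + 2) in IH *.
have v16 : (16 <= v)%N by apply: leq_trans V_2_ge16 (V_le _ _); lia.
have : (v ^ 3 <= V (j.+1 + 2))%N.
  rewrite addSn; apply: leq_trans (V_cube_le_Usucc _) (U_le_V _); lia.
apply: leq_trans; rewrite !expnS expn0 !muln1 in IH *.
have : ((j.+1 + 3) * (j.+1 + 3) * 2 <= (j + 3) * (j + 3) * (v * v))%N by nia.
move: IH; set a := (2 ^ j)%N; nia.
Qed.

End FrameGrowth.

Section Zeta2.
Variable R : realType.

Definition zeta2_term (n : nat) : R := ((n.+1)%:R ^+ 2)^-1.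

Lemma zeta2_term_ge0 n : 0 <= zeta2_term n.
Proof. by rewrite invr_ge0 exprn_ge0. Qed.

Lemma zeta2_series_nd : nondecreasing_seq (series zeta2_term).
Proof. by apply/nondecreasing_seqP => n; rewrite seriesSr lerDl zeta2_term_ge0. Qed.

(* Telescoping against [2 / n - 2 / (n + 1)], which dominates [n ^ -2] for [n >= 1]. *)
Lemma zeta2_series_le n : series zeta2_term n <= 2 - 2 / n.+1%:R.
Proof.
elim: n => [|n IH]; first by rewrite /series /= big_nil divr1 subrr.
rewrite seriesSr; apply: le_trans (lerD IH (lexx _)) _.
have : 1 <= n.+1%:R :> R by rewrite ler1n.
rewrite /zeta2_term -[n.+2]addn1 natrD; move: n.+1%:R => a a1.
have a0 : 0 < a by apply: lt_le_trans a1.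
rewrite -subr_ge0.
have -> : 2 - 2 / (a + 1) - (2 - 2 / a + (a ^+ 2)^-1) = (a - 1) / (a ^+ 2 * (a + 1)).
  by field; rewrite !lt0r_neq0 // addr_gt0.
by rewrite divr_ge0 ?subr_ge0 // mulr_ge0 // ?exprn_ge0 ?addr_ge0 // ltW.
Qed.

Lemma zeta2_series_cvg : cvgn (series zeta2_term).
Proof.
apply: nondecreasing_is_cvgn; first exact: zeta2_series_nd.
exists 2 => _ [n _ <-]; apply: le_trans (zeta2_series_le n) _.
by rewrite gerDl oppr_le0 divr_ge0.
Qed.

Lemma zeta2_series_le_Cconst n : series zeta2_term n <= Cconst R.
Proof. exact: nondecreasing_cvgn_le zeta2_series_nd zeta2_series_cvg n. Qed.

Lemma Cconst_ge1 : 1 <= Cconst R.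
Proof.
apply: le_trans (zeta2_series_le_Cconst 1).
by rewrite /series /= big_nat1 /zeta2_term expr1n invr1.
Qed.

Lemma Cconst_gt0 : 0 < Cconst R.
Proof. exact: lt_le_trans ltr01 Cconst_ge1. Qed.

Lemma pn_succE n : pn R n.+1 = zeta2_term n / Cconst R.
Proof. by rewrite /pn /zeta2_term invfM mulrC. Qed.

Lemma pn_ge0 n : 0 <= pn R n.
Proof. by rewrite invr_ge0 mulr_ge0 ?exprn_ge0 // ltW ?Cconst_gt0. Qed.

Lemma pn_gt0 n : (0 < n)%N -> 0 < pn R n.
Proof. by move=> n0; rewrite invr_gt0 mulr_gt0 ?Cconst_gt0 ?exprn_gt0 ?ltr0n. Qed.

Lemma pn_le1 n : (0 < n)%N -> pn R n <= 1.
Proof.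
move=> n0; rewrite invf_le1 ?mulr_gt0 ?Cconst_gt0 ?exprn_gt0 ?ltr0n //.
by rewrite -[leLHS]mulr1 ler_pM ?Cconst_ge1 ?exprn_ege1 ?ler1n.
Qed.

Lemma sum_pn_lt g : (0 < g)%N -> \sum_(1 <= x < g) pn R x <= 1 - pn R g.
Proof.
case: g => // g _; rewrite lerBrDr.
have -> : \sum_(1 <= x < g.+1) pn R x + pn R g.+1 = series zeta2_term g.+1 / Cconst R.
  rewrite -big_nat_recr //= big_add1 /= /series mulr_suml.
  by apply: eq_bigr => x _; rewrite pn_succE.
by rewrite ler_pdivrMr ?Cconst_gt0 // mul1r zeta2_series_le_Cconst.
Qed.

End Zeta2.

Lemma bernoulli_le (R : realFieldType) (x : R) k :
  0 <= x <= 1 -> (1 - x) ^+ k * (1 + k%:R * x) <= 1.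
Proof.
move=> /andP[x0 x1]; elim: k => [|k IH]; first by rewrite mul0r addr0 mulr1.
rewrite exprS -mulrA; apply: le_trans IH; rewrite mulrCA.
apply: ler_wpM2l; first by rewrite exprn_ge0 // subr_ge0.
have k0 : 0 <= k%:R :> R := ler0n _ _.
by rewrite mulrSr; nra.
Qed.

Lemma expr_le_inv (R : realFieldType) (x : R) k : 0 < x <= 1 -> (0 < k)%N ->
  (1 - x) ^+ k <= (k%:R * x)^-1.
Proof.
move=> /andP[x0 x1] k0; have kx : 0 < k%:R * x by rewrite mulr_gt0 ?ltr0n.
rewrite -div1r ler_pdivlMr //; apply: le_trans (bernoulli_le (x := x) k _); last by rewrite ltW.
by rewrite ler_wpM2l ?exprn_ge0 ?subr_ge0 // lerDr.
Qed.

Lemma sum_geometric_half_le (R : realFieldType) J N :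
  \sum_(J <= j < J + N) (2 ^+ j)^-1 <= 2 / 2 ^+ J :> R.
Proof.
elim: N J => [|N IH] J; first by rewrite addn0 big_geq // divr_ge0 ?exprn_ge0.
rewrite big_ltn; last by rewrite addnS ltnS leq_addr.
rewrite -addSnnS; apply: le_trans (lerD (lexx _) (IH J.+1)) _.
have pJ : 0 < 2 ^+ J :> R by rewrite exprn_gt0.
rewrite exprS (_ : _ + _ = 2 / 2 ^+ J) //.
by field; rewrite lt0r_neq0.
Qed.

Lemma nneseries_EFin_le (R : realType) (u : nat -> R) (B : R) :
  (forall n, 0 <= u n) -> (forall N, \sum_(n < N) u n <= B) ->
  (\sum_(n <oo) (u n)%:E <= B%:E)%E.
Proof.
move=> u0 uB.
have nd : nondecreasing_seq (fun N => (\sum_(0 <= n < N) (u n)%:E)%E).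
  by apply: ereal_nondecreasing_series => n _ _; rewrite lee_fin.
rewrite (cvg_lim _ (ereal_nondecreasing_cvgn nd)) //.
apply: ge_ereal_sup => _ [N _ <-] /=.
by rewrite -EFin_sum_fine ?big_mkord ?lee_fin.
Qed.

Section Enumeration.
Variables (T : eqType) (x0 : T) (F : nat -> seq T).
Hypothesis F_neq0 : forall j, F j != [::].

Definition families J n := flatten [seq F j | j <- iota J n].

Lemma size_families J n : (n <= size (families J n))%N.
Proof.
elim: n => // n IH; rewrite /families -addn1 iotaD map_cat flatten_cat /= cats0.
by rewrite size_cat leq_add // lt0n size_eq0.
Qed.

Lemma nth_families J m n i : (m <= n)%N -> (i < size (families J m))%N ->
  nth x0 (families J n) i = nth x0 (families J m) i.
Proof.
by move=> /subnKC <- im; rewrite /families iotaD map_cat flatten_cat nth_cat im.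
Qed.

(* Enumerates [F J], [F J.+1], ... in order; [nth] stays in range since no [F j] is empty. *)
Definition enum_families J n := nth x0 (families J n.+1) n.

Lemma enum_families_mem J n : exists2 j, (J <= j)%N & enum_families J n \in F j.
Proof.
have /(mem_nth x0)/flattenP[_ /mapP[j + ->]] := size_families J n.+1.
by rewrite mem_iota => /andP[Jj _] ?; exists j.
Qed.

Lemma enum_families_onto J j a : (J <= j)%N -> a \in F j ->
  exists n, enum_families J n = a.
Proof.
move=> Jj Fa; set m := (j - J).+1.
have : a \in families J m.
  by apply/flattenP; exists (F j) => //; apply: map_f; rewrite mem_iota; lia.
rewrite -index_mem; set i := index a _ => im; exists i.
rewrite /enum_families -(@nth_families J i.+1 (maxn m i.+1)) ?leq_maxr ?size_families //.
by rewrite (@nth_families J m) ?leq_maxl // nth_index // -index_mem.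
Qed.

Lemma sum_enum_families (R : numDomainType) (f : T -> R) J N : (forall a, 0 <= f a) ->
  \sum_(n < N) f (enum_families J n) <= \sum_(J <= j < J + N) \sum_(a <- F j) f a.
Proof.
move=> f0; have sN := size_families J N.
have -> : \sum_(n < N) f (enum_families J n) = \sum_(a <- take N (families J N)) f a.
  rewrite (big_nth x0) size_take_min (minn_idPl sN) big_mkord.
  apply: eq_bigr => n _; rewrite nth_take // /enum_families.
  by rewrite (@nth_families J n.+1 N n) ?size_families.
have -> : \sum_(J <= j < J + N) \sum_(a <- F j) f a = \sum_(a <- families J N) f a.
  by rewrite big_flatten big_map /index_iota addKn.
rewrite -{2}(cat_take_drop N (families J N)) big_cat /= lerDl.
exact: sumr_ge0.
Qed.

End Enumeration.

Lemma P_null_limsup (R : realType) (c : R) (E : nat -> seq (seq nat)) (B : set (nat -> nat)) :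
  (forall j, E j != [::]) ->
  (forall j a, a \in E j -> all (fun k => 0 < k)%N a) ->
  (forall j, \sum_(a <- E j) cyl_mass R a <= c / 2 ^+ j) ->
  B `<=` [set w | forall J, exists j a, [/\ (J <= j)%N, a \in E j & cylinder a w]] ->
  P_null R B.
Proof.
move=> E_neq0 E_pos E_mass BE eps eps0.
have mass0 a : 0 <= cyl_mass R a by apply: prodr_ge0 => k _; apply: pn_ge0.
have c0 : 0 <= c.
  by have := E_mass 0%N; rewrite expr0 divr1; apply: le_trans; apply: sumr_ge0.
set J := Num.bound (2 * c / eps).
have hJ : 2 * c / eps < J%:R by apply: archi_boundP; rewrite divr_ge0 ?mulr_ge0 // ltW.
exists (enum_families [::] E J); split.
- by move=> n; have [j _] := enum_families_mem [::] E_neq0 J n; apply: E_pos.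
- move=> w /BE /(_ J) [j [a [Jj Ea wa]]].
  by have [n na] := enum_families_onto [::] E_neq0 Jj Ea; exists n; rewrite ?na.
apply: nneseries_EFin_le => // N.
apply: le_trans (sum_enum_families _ E_neq0 _ _ mass0) _.
apply: le_trans (ler_sum _ (fun j _ => E_mass j)) _.
rewrite -mulr_sumr; apply: le_trans (ler_wpM2l c0 (sum_geometric_half_le _ J N)) _.
rewrite mulrA ler_pdivrMr ?exprn_gt0 // -ler_pdivrMl //.
rewrite mulrC (mulrC c); apply: le_trans (ltW hJ) _.
by rewrite -natrX ler_nat ltnW // ltn_expl.
Qed.

Lemma P_null_sub (R : realType) (A B : set (nat -> nat)) :
  A `<=` B -> P_null R B -> P_null R A.
Proof.
by move=> AB nullB eps /nullB[c [c_pos Bc c_mass]]; exists c; split => //; apply: subset_trans Bc.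
Qed.

Fixpoint small_words (g k : nat) : seq (seq nat) :=
  if k is k'.+1 then [seq x :: a | x <- index_iota 1 g, a <- small_words g k']
  else [:: [::]].

Lemma small_wordsP g k a :
  reflect (size a = k /\ all (fun x => 0 < x < g)%N a) (a \in small_words g k).
Proof.
elim: k a => [|k IH] [|x a] /=; rewrite ?inE.
- by left.
- by right; case.
- by apply: (iffP allpairsP) => [[[y b] []]|[]].
apply: (iffP allpairsP) => [[[y b] [/= + /IH[sb bg] [-> ->]]]|[[sk] /andP[xg ag]]].
  by rewrite mem_index_iota /= sb bg andbT.
by exists (x, a); split; rewrite ?mem_index_iota //; apply/IH.
Qed.

Lemma small_words_mass (R : realType) g k :
  \sum_(a <- small_words g k) cyl_mass R a = (\sum_(1 <= x < g) pn R x) ^+ k.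
Proof.
elim: k => [|k IH]; first by rewrite big_seq1 /cyl_mass big_nil expr0.
rewrite /= big_allpairs_dep exprS mulr_suml; apply: eq_bigr => x _.
by rewrite -IH mulr_sumr; apply: eq_bigr => a _; rewrite /cyl_mass big_cons.
Qed.

Section HausdorffDimension.
Variables (R : realType) (d : nat).
Local Notation pt := (pt R d).

Lemma diam_le (A : set pt) r :
  (forall x y, A x -> A y -> Defs.edist x y <= r) -> (diam A <= r%:E)%E.
Proof. by move=> Ar; apply: ge_ereal_sup => _ [x [y [Ax [Ay ->]]]]; rewrite lee_fin Ar. Qed.

Lemma diam_ge0 (A : set pt) : A !=set0 -> (0 <= diam A)%E.
Proof.
move=> [x Ax]; apply: le_ereal_sup_tmp; exists (Defs.edist x x)%:E.
  by exists x, x.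
by rewrite lee_fin sqrtr_ge0.
Qed.

Lemma diam_set0 : diam (@set0 pt) = -oo%E.
Proof.
rewrite /diam (_ : [set _ | _] = set0) ?ereal_sup0 //.
by apply/seteqP; split => // r [x [y [[]]]].
Qed.

Lemma hcontrib_set0 s : hcontrib s (@set0 pt) = 0%E.
Proof. by rewrite /hcontrib diam_set0. Qed.

Lemma hcontrib_ge0 s (A : set pt) : (0 <= hcontrib s A)%E.
Proof. by rewrite /hcontrib; case: (diam A) => [r| |] //=; rewrite lee_fin powR_ge0. Qed.

Lemma hcontrib_le s (A : set pt) r : 0 <= s -> (diam A <= r%:E)%E ->
  (hcontrib s A <= (powR r s)%:E)%E.
Proof.
move=> s0 Ar; have [->|A0] := eqVneq A set0.
  by rewrite hcontrib_set0 lee_fin powR_ge0.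
move/set0P: A0 => /diam_ge0; rewrite /hcontrib; move: Ar.
case: (diam A) => [a| |] //=; rewrite !lee_fin => ar a0.
by rewrite ge0_ler_powR // nnegrE // (le_trans a0 ar).
Qed.

Lemma hausdorff_delta_ge0 s delta (A : set pt) : (0 <= hausdorff_delta s delta A)%E.
Proof.
apply: le_ereal_inf_tmp => _ [C _ <-].
by apply: nneseries_ge0 => n _ _; apply: hcontrib_ge0.
Qed.

Lemma hausdorff_delta_le_cover s delta r (A : set pt) (C : nat -> set pt) N :
  0 <= s -> r <= delta -> A `<=` \bigcup_(i in `I_N) C i ->
  (forall i, (i < N)%N -> (diam (C i) <= r%:E)%E) ->
  (hausdorff_delta s delta A <= (N%:R * powR r s)%:E)%E.
Proof.
move=> s0 rd AC Cr; pose C' i := if (i < N)%N then C i else set0.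
apply: ge_ereal_inf; exists (\sum_(i <oo) hcontrib s (C' i))%E.
  exists C' => //; split.
    by move=> x /AC [i /= iN Cix]; exists i => //; rewrite /C' iN.
  move=> i; rewrite /C'; case: ifP => [iN|_]; last by rewrite diam_set0 leNye.
  by apply: le_trans (Cr i iN) _; rewrite lee_fin.
rewrite (nneseries_split 0 N) => [|k _]; last exact: hcontrib_ge0.
rewrite add0n eseries0 ?adde0 => [|i Ni _]; last by rewrite /C' ltnNge Ni hcontrib_set0.
rewrite big_mkord (eq_bigr (fun i : 'I_N => hcontrib s (C i))) => [|i _]; last first.
  by rewrite /C' ltn_ord.
apply: (@le_trans _ _ (\sum_(i < N) (powR r s)%:E)%E).
  by apply: lee_sum => i _; apply: hcontrib_le s0 (Cr i (ltn_ord i)).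
by rewrite sumEFin sumr_const card_ord mulr_natl.
Qed.

Lemma hausdorff_eq0 s (A : set pt) :
  (forall delta eps, 0 < delta -> 0 < eps -> (hausdorff_delta s delta A <= eps%:E)%E) ->
  hausdorff s A = 0%E.
Proof.
move=> small.
have H0 delta : 0 < delta -> hausdorff_delta s delta A = 0%E.
  move=> delta0; apply/eqP; rewrite eq_le hausdorff_delta_ge0 andbT.
  by apply/lee_addgt0Pr => eps eps0; rewrite add0e small.
apply/eqP; rewrite eq_le; apply/andP; split.
  by apply: ge_ereal_sup => _ [delta delta0 <-]; rewrite H0.
apply: le_ereal_sup_tmp; exists (hausdorff_delta s 1 A); first by exists 1 => //; apply: ltr01.
by rewrite H0 ?ltr01.
Qed.

Lemma hdim_eq0 (A : set pt) : (forall s, 0 < s -> hausdorff s A = 0%E) -> hdim A = 0%E.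
Proof.
move=> H0; apply/eqP; rewrite eq_le; apply/andP; split.
  apply/lee_addgt0Pr => e e0; rewrite add0e.
  by apply: ge_ereal_inf; exists e%:E => //; exists e => //; split; [exact: ltW | exact: H0].
by apply: le_ereal_inf_tmp => _ [s [s0 _] <-]; rewrite lee_fin.
Qed.

End HausdorffDimension.

Section Words.
Variables (R : realType) (d : nat).
Local Notation pt := (pt R d).
Local Notation letter := ('I_d -> bool).
Local Notation word := (seq letter).

Definition zero_letter : letter := fun _ => false.

Lemma phi_word_cat (w1 w2 : word) (x : pt) :
  phi_word (w1 ++ w2) x = phi_word w1 (phi_word w2 x).
Proof. exact: foldr_cat. Qed.

Lemma phi_wordE (w : word) (x : pt) l :
  phi_word w x l = x l / 2 ^+ size w + phi_word w (fun _ => 0) l.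
Proof.
elim: w x => [|b w IH] x /=; first by rewrite divr1 addr0.
by rewrite /phi IH [in RHS]IH exprS invfM mul0r add0r; ring.
Qed.

Lemma phi_word_Xcube (w : word) (x : pt) : Xcube x -> Xcube (phi_word w x).
Proof.
elim: w => [|b w IH] //= Xx l; have /andP[x0 x1] := IH Xx l.
have b0 : 0 <= (b l)%:R :> R := ler0n _ _.
have b1 : (b l)%:R <= 1 :> R by case: (b l).
by rewrite /phi; apply/andP; split; lra.
Qed.

Lemma edist_phi_word (w : word) (x y : pt) : Xcube x -> Xcube y ->
  Defs.edist (phi_word w x) (phi_word w y) <= Num.sqrt d%:R / 2 ^+ size w.
Proof.
move=> Xx Xy; have c0 : 0 <= (2 ^+ size w)^-1 :> R by rewrite invr_ge0 exprn_ge0.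
rewrite -[_ / _]ger0_norm ?divr_ge0 ?sqrtr_ge0 ?exprn_ge0 //.
rewrite -sqrtr_sqr exprMn sqr_sqrtr // ler_sqrt ?mulr_ge0 ?exprn_ge0 //.
rewrite (_ : d%:R * _ = \sum_(l < d) (2 ^+ size w)^-1 ^+ 2); last first.
  by rewrite sumr_const card_ord mulr_natl.
apply: ler_sum => l _.
rewrite (phi_wordE w x) (phi_wordE w y) opprD addrACA subrr addr0 -mulrBl exprMn.
rewrite ler_piMl ?exprn_ge0 //.
by have /andP[? ?] := Xx l; have /andP[? ?] := Xy l; nra.
Qed.

Lemma diam_phi_word_Xcube (w : word) :
  (diam (phi_word w @` @Xcube R d) <= (Num.sqrt d%:R / 2 ^+ size w)%:E)%E.
Proof. by apply: diam_le => _ _ [x Xx <-] [y Xy <-]; apply: edist_phi_word. Qed.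

Variables U V : nat -> nat.

Lemma in_I_split a (w : word) : in_I U V a w ->
  w = nseq (U a) zero_letter ++ drop (U a) w /\ size (drop (U a) w) = V a.
Proof.
move=> [sw w0]; split; last by rewrite size_drop sw addKn.
rewrite -{1}(cat_take_drop (U a) w); congr (_ ++ _).
apply: (@eq_from_nth _ zero_letter); first by rewrite size_takel ?size_nseq // sw leq_addr.
move=> i; rewrite size_takel ?sw ?leq_addr // => iU.
by rewrite nth_nseq iU nth_take //; apply/funext => l; apply: w0.
Qed.

(* Cut after the forced zero letters of level [k]. *)
Lemma Jset_stage (omega : nat -> nat) (x : pt) k : @Jset R d U V omega x ->
  exists ws : seq word, [/\ size ws = k,
    (forall i, (i < k)%N -> in_I U V (omega i) (nth [::] ws i)) &
    exists2 y, Xcube y & x = phi_word (flatten ws ++ nseq (U (omega k)) zero_letter) y].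
Proof.
move=> /(_ k.+1 (ltn0Sn k)) [ws [sws wsI [y [Xy ->]]]].
have [wk_split _] := in_I_split (wsI k (ltnSn k)).
exists (take k ws); split.
- by rewrite size_take sws ltnSn.
- by move=> i ik; rewrite nth_take //; apply/wsI/ltnW.
exists (phi_word (drop (U (omega k)) (nth [::] ws k)) y); first exact: phi_word_Xcube.
rewrite -phi_word_cat -catA -wk_split -{1}(cat_take_drop k ws) flatten_cat.
by rewrite (drop_nth [::]) ?sws // drop_oversize ?sws //= cats0.
Qed.

Definition letters : seq letter :=
  [seq (fun l => f l) | f : {ffun letter} <- enum {ffun letter}].

Lemma size_letters : size letters = (2 ^ d)%N.
Proof. by rewrite size_map -cardE card_ffun card_bool card_ord. Qed.

Lemma mem_letters b : b \in letters.
Proof.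
apply/mapP; exists [ffun l => b l]; first by rewrite mem_enum.
by apply/funext => l; rewrite ffunE.
Qed.

Fixpoint words (n : nat) : seq word :=
  if n is n'.+1 then [seq b :: w | b <- letters, w <- words n'] else [:: [::]].

Lemma size_words n : size (words n) = (2 ^ (d * n))%N.
Proof.
by elim: n => [|n IH] //=; rewrite ?muln0 // size_allpairs size_letters IH -expnD mulnS.
Qed.

Lemma mem_words (w : word) : w \in words (size w).
Proof.
by elim: w => [|b w IH] /=; rewrite ?inE // (allpairs_f (fun b w => b :: w)) ?mem_letters.
Qed.

Fixpoint prefix_words (ls : seq nat) : seq word :=
  if ls is a :: ls' then
    [seq (nseq (U a) zero_letter ++ q) ++ r | q <- words (V a), r <- prefix_words ls']
  else [:: [::]].

Lemma size_prefix_words ls : size (prefix_words ls) = (2 ^ (d * \sum_(a <- ls) V a))%N.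
Proof.
elim: ls => [|a ls IH] /=; first by rewrite big_nil muln0.
by rewrite size_allpairs size_words IH -expnD big_cons mulnDr.
Qed.

Lemma mem_prefix_words ls (ws : seq word) : size ws = size ls ->
  (forall i, (i < size ls)%N -> in_I U V (nth 0%N ls i) (nth [::] ws i)) ->
  flatten ws \in prefix_words ls.
Proof.
elim: ls ws => [|a ls IH] [|w ws] //= [sws] wsI.
have [w_split sw] := in_I_split (wsI 0%N (ltn0Sn _)).
rewrite [w]w_split; apply: allpairs_f; first by rewrite -sw mem_words.
by apply: IH => // i; apply: (wsI i.+1).
Qed.

Lemma hausdorff_delta_Jset_le (omega : nat -> nat) k s delta :
  0 <= s -> Num.sqrt d%:R / 2 ^+ U (omega k) <= delta ->
  (hausdorff_delta s delta (@Jset R d U V omega) <=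
    ((2 ^ (d * \sum_(0 <= i < k) V (omega i)))%:R *
     powR (Num.sqrt d%:R / 2 ^+ U (omega k)) s)%:E)%E.
Proof.
move=> s0 delta_ge.
set W := prefix_words [seq omega i | i <- index_iota 0 k].
set C := fun i => phi_word (nth [::] W i ++ nseq (U (omega k)) zero_letter) @` @Xcube R d.
rewrite -(big_map omega xpredT V) -size_prefix_words -/W.
apply: (hausdorff_delta_le_cover (C := C)) => // [x|i _].
  move=> /(Jset_stage k)[ws [sws wsI [y Xy ->]]].
  have Wws : flatten ws \in W.
    apply: mem_prefix_words; rewrite /index_iota subn0 size_map size_iota // => i ik.
    by rewrite (nth_map 0%N) ?size_iota // nth_iota //; apply: wsI.
  exists (index (flatten ws) W); first by rewrite /= index_mem.
  by rewrite /C nth_index //; exists y.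
apply: le_trans (diam_phi_word_Xcube _) _.
rewrite lee_fin ler_wpM2l ?sqrtr_ge0 // lef_pV2 ?posrE ?exprn_gt0 //.
by rewrite ler_eXn2l ?ltr1n // size_cat size_nseq leq_addl.
Qed.

End Words.

Lemma cube_dominates (R : archiRealFieldType) (a b c : R) : 0 < c ->
  exists v0 : nat, forall v : nat, (v0 <= v)%N -> a * v%:R ^+ 2 + b <= c * v%:R ^+ 3.
Proof.
move=> c0; exists (Num.bound ((`|a| + `|b|) / c)).+1 => v v0v.
have abv : `|a| + `|b| < v%:R * c.
  rewrite -ltr_pdivrMr //; apply: lt_le_trans (archi_boundP _) _.
    by rewrite divr_ge0 ?addr_ge0 // ltW.
  by rewrite ler_nat ltnW.
have v1 : 1 <= v%:R :> R by rewrite ler1n (leq_trans _ v0v).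
have aa := ler_norm a; have bb := ler_norm b; have b0 := normr_ge0 b.
have v2 : 1 <= v%:R ^+ 2 :> R by rewrite exprn_ege1.
have := ler_wpM2r (exprn_ge0 2 (ler0n R v)) (ltW abv).
nra.
Qed.

Lemma cover_estimate (R : realType) (d : nat) (s eps delta : R) :
  (0 < d)%N -> 0 < s -> 0 < eps -> 0 < delta ->
  exists v0 : nat, forall v L : nat, (v0 <= v)%N -> (v ^ 3 <= L)%N ->
    (2 ^ (d * (v * v)))%:R * powR (Num.sqrt d%:R / 2 ^+ L) s <= eps /\
    Num.sqrt d%:R / 2 ^+ L <= delta.
Proof.
move=> d0 s0 eps0 delta0; set q := Num.sqrt d%:R; set l2 := ln (2 : R).
have q0 : 0 < q by rewrite sqrtr_gt0 ltr0n.
have l20 : 0 < l2 by rewrite ln_gt0 // ltr1n.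
have [v1 hv1] := cube_dominates (d%:R * l2) (s * ln q - ln eps) (mulr_gt0 s0 l20).
have [v2 hv2] := cube_dominates 0 (ln q - ln delta) l20.
exists (maxn v1 v2) => v L v0v vL.
have {hv1}hv1 := hv1 v (leq_trans (leq_maxl _ _) v0v).
have {hv2}hv2 := hv2 v (leq_trans (leq_maxr _ _) v0v).
have {}vL : v%:R ^+ 3 <= L%:R :> R by rewrite -natrX ler_nat.
have B0 : 0 < q / 2 ^+ L by rewrite divr_gt0 ?exprn_gt0.
have lnB : ln (q / 2 ^+ L) = ln q - L%:R * l2.
  by rewrite ln_div ?posrE ?exprn_gt0 // lnXn // mulr_natl.
have pow2 n : (2 : R) ^+ n = expR (n%:R * l2) by rewrite expRM_natl lnK ?posrE.
split.
- rewrite /powR gt_eqF // natrX pow2 -expRD -[leRHS]lnK ?posrE // ler_expR lnB.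
  have := ler_wpM2l (ltW (mulr_gt0 s0 l20)) vL.
  by rewrite !natrM; nra.
- rewrite -[leRHS]lnK ?posrE // -[leLHS]lnK ?posrE // ler_expR lnB.
  by have := ler_wpM2l (ltW l20) vL; nra.
Qed.

Section FrameConsequences.
Variables U V : nat -> nat.
Hypothesis frameUV : is_frame U V.

Lemma small_words_frame_mass (R : realType) j :
  \sum_(a <- small_words (j + 3) (V (j + 2))) cyl_mass R a <= Cconst R / 2 ^+ j.
Proof.
rewrite small_words_mass; set g := (j + 3)%N; set k := V (j + 2).
have g0 : (0 < g)%N by rewrite /g addn3.
have kg : (g ^ 2 * 2 ^ j <= k)%N := V_growth frameUV j.
have k0 : (0 < k)%N by apply: leq_trans kg; rewrite muln_gt0 !expn_gt0 g0.
apply: le_trans (lerXn2r _ _ _ (sum_pn_lt R g0)) _; rewrite ?nnegrE ?subr_ge0 ?pn_le1 //.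
  by apply: sumr_ge0 => x _; apply: pn_ge0.
apply: le_trans (expr_le_inv _ k0) _; first by rewrite pn_gt0 ?pn_le1.
rewrite /pn invfM invrK mulrCA; apply: ler_wpM2l; first exact/ltW/Cconst_gt0.
rewrite ler_pdivrMl ?ltr0n // ler_pdivlMr ?exprn_gt0 //.
by rewrite -!natrX -natrM ler_nat.
Qed.

Lemma P_null_often_small (R : realType) :
  P_null R [set w | (forall k, (0 < w k)%N) /\
                    forall J, exists2 j, (J <= j)%N &
                      forall k, (k < V (j + 2))%N -> (w k < j + 3)%N].
Proof.
apply: (P_null_limsup (E := fun j => small_words (j + 3) (V (j + 2)))).
- move=> j; apply/negP => /eqP E0.
  have : nseq (V (j + 2)) 1%N \in small_words (j + 3) (V (j + 2)).
    by apply/small_wordsP; rewrite size_nseq all_nseq addn3 orbT.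
  by rewrite E0.
- by move=> j a /small_wordsP[_]; apply: sub_all => x /andP[].
- exact: small_words_frame_mass.
move=> w [w0 small] J; have [j Jj wj] := small J.
exists j, (mkseq w (V (j + 2))); split => //.
  apply/small_wordsP; rewrite size_mkseq; split => //.
  by apply/allP => _ /mapP[k /[!mem_iota] /andP[_ kV] ->]; rewrite w0 wj.
by move=> k; rewrite size_mkseq => kV; rewrite nth_mkseq.
Qed.

Lemma frame_stage (omega : nat -> nat) j :
  (forall k, (0 < omega k)%N) -> (exists2 k, (k < V (j + 2))%N & (j + 3 <= omega k)%N) ->
  exists k, (\sum_(0 <= i < k) V (omega i) <= V (j + 2) * V (j + 2))%N /\
            (V (j + 2) ^ 3 <= U (omega k))%N.
Proof.
move=> omega0 [k0 k0V large_k0].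
have [k large_k k_min] := find_ex_minn (ex_intro (fun k => j + 3 <= omega k)%N k0 large_k0).
exists k; split.
  rewrite big_mkord; apply: leq_trans (_ : _ <= \sum_(i < k) V (j + 2))%N _.
    apply: leq_sum => i _; apply: (V_le frameUV (omega0 i)).
    by have := k_min i; have := ltn_ord i; lia.
  by rewrite sum_nat_const card_ord leq_mul2r (leq_trans (k_min _ large_k0) (ltnW k0V)) orbT.
apply: leq_trans (V_cube_le_Usucc frameUV _) (U_le frameUV _ _); rewrite ?addn_gt0 ?orbT //.
by move: large_k; lia.
Qed.

Lemma hdim_Jset_eq0 (R : realType) (d : nat) (omega : nat -> nat) J :
  (0 < d)%N -> (forall k, (0 < omega k)%N) ->
  (forall j, (J <= j)%N -> exists2 k, (k < V (j + 2))%N & (j + 3 <= omega k)%N) ->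
  hdim (@Jset R d U V omega) = 0%E.
Proof.
move=> d0 omega0 large; apply: hdim_eq0 => s s0; apply: hausdorff_eq0 => delta eps delta0 eps0.
have [v0 estimate] := cover_estimate d0 s0 eps0 delta0.
set j := maxn J v0.
have [k [sumV VU]] := frame_stage omega0 (large j (leq_maxl J v0)).
have v0V : (v0 <= V (j + 2))%N.
  apply: leq_trans (leq_maxr J v0) (leq_trans _ (V_growth frameUV j)).
  apply: leq_trans (ltnW (ltn_expl j (isT : 1 < 2)%N)) _.
  by rewrite leq_pmull // expn_gt0 addn3.
have [eps_ge delta_ge] := estimate _ _ v0V VU.
apply: le_trans (@hausdorff_delta_Jset_le R d U V omega k s delta (ltW s0) delta_ge) _.
rewrite lee_fin; apply: le_trans eps_ge.
by rewrite ler_wpM2r ?powR_ge0 // ler_nat leq_pexp2l // leq_mul2l sumV orbT.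
Qed.

End FrameConsequences.

Theorem proposition2p4 (R : realType) (d : nat) (U V : nat -> nat) :
  (1 <= d)%N -> is_frame U V ->
  P_null R [set omega | (forall k, (0 < omega k)%N) /\
                        hdim (@Jset R d U V omega) <> 0%E].
Proof.
move=> d0 frameUV; apply: (P_null_sub _ (P_null_often_small frameUV (R := R))).
move=> w [w0 hdim_neq0]; split => // J.
apply: contrapT => not_small; apply: hdim_neq0.
apply: (@hdim_Jset_eq0 U V frameUV R d w J) => // j Jj.
apply: contrapT => not_large; apply: not_small; exists j => // k kV.
by rewrite ltnNge; apply/negP => large; apply: not_large; exists k.
Qed.
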